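(* Let $1\to K\to G\to H\to 1$ be a short exact sequence of countable discrete groups, each equipped with a proper left-invariant metric. If $K$ and $H$ have finite APC-decomposition complexity, then $G$ has finite APC-decomposition complexity.
   Context: Every countable group carries a proper left-invariant metric (e.g. a weighted word metric with proper weights), unique up to coarse equivalence. A family $\mathcal{U}$ of metric subspaces of $(X,d)$ is $r$-disjoint if $d(x,y)>r$ whenever $x\in U$, $y\in U'$, $U\neq U'$ in $\mathcal{U}$. For families $\mathcal{X},\mathcal{Y}$ and $R\in\mathbb{R}^{\mathbb{N}}$, $\mathcal{X}\xrightarrow{R}\mathcal{Y}$ means: there is an integer $k$ such that for each $X\in\mathcal{X}$ there are subcollections $\mathcal{U}_1,\dots,\mathcal{U}_k\subseteq\mathcal{Y}$ of subspaces of $X$, each $\mathcal{U}_i$ being $R_i$-disjoint, with $\bigcup_i\mathcal{U}_i$ covering $X$. A family is bounded if the diameters of its members are uniformly bounded. $\mathfrak{C}_0$ is the class of bounded families; for an ordinal $\alpha>0$, $\mathfrak{C}_\alpha$ is the class of families $\mathcal{X}$ such that for every $R\in\mathbb{R}^{\mathbb{N}}$ there exist $\beta<\alpha$ and $\mathcal{Y}\in\mathfrak{C}_\beta$ with $\mathcal{X}\xrightarrow{R}\mathcal{Y}$. A metric space has finite APC-decomposition complexity if it is a member of some family belonging to $\mathfrak{C}_\alpha$ for some ordinal $\alpha$. *)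

From Stdlib Require Import Reals List.
Open Scope R_scope.

Record Group := {
  carrier :> Type;
  gmul : carrier -> carrier -> carrier;
  ginv : carrier -> carrier;
  gone : carrier;
  gmul_assoc : forall x y z, gmul x (gmul y z) = gmul (gmul x y) z;
  gmul_1l : forall x, gmul gone x = x;
  gmul_Vl : forall x, gmul (ginv x) x = gone
}.

Arguments gmul {g}.
Arguments ginv {g}.
Arguments gone {g}.

Definition countable_group (G : Group) : Prop :=
  exists f : G -> nat, forall x y, f x = f y -> x = y.

Definition is_hom {G H : Group} (f : G -> H) : Prop :=
  forall x y, f (gmul x y) = gmul (f x) (f y).

Definition short_exact {K G H : Group} (i : K -> G) (p : G -> H) : Prop :=
  is_hom i /\ is_hom p /\
  (forall x y, i x = i y -> x = y) /\
  (forall h, exists g, p g = h) /\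
  (forall g, p g = gone <-> exists k, i k = g).

Definition is_metric {M : Type} (d : M -> M -> R) : Prop :=
  (forall x y, 0 <= d x y) /\
  (forall x y, d x y = 0 <-> x = y) /\
  (forall x y, d x y = d y x) /\
  (forall x y z, d x z <= d x y + d y z).

(** proper: every closed ball is compact, i.e. (the space being discrete) finite *)
Definition proper_metric {M : Type} (d : M -> M -> R) : Prop :=
  forall (x : M) (r : R), exists l : list M, forall y, d x y <= r -> In y l.

Definition left_invariant {G : Group} (d : G -> G -> R) : Prop :=
  forall g x y, d (gmul g x) (gmul g y) = d x y.

Definition proper_left_invariant_metric {G : Group} (d : G -> G -> R) : Prop :=
  is_metric d /\ proper_metric d /\ left_invariant d.

(** Families of metric subspaces of (M,d): sets of subsets of M,
    each subset carrying the restricted metric. *)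
Definition family (M : Type) := (M -> Prop) -> Prop.

Definition r_disjoint {M : Type} (d : M -> M -> R) (r : R) (U : family M) : Prop :=
  forall A B, U A -> U B -> A <> B -> forall x y, A x -> B y -> d x y > r.

Definition bounded_family {M : Type} (d : M -> M -> R) (F : family M) : Prop :=
  exists b : R, forall X, F X -> forall x y, X x -> X y -> d x y <= b.

(** X --R--> Y ; the sequence R is indexed from 0, so R_1..R_k of the
    paper are Rs 0 .. Rs (k-1). *)
Definition decomposes {M : Type} (d : M -> M -> R) (X Y : family M)
  (Rs : nat -> R) : Prop :=
  exists k : nat, forall A, X A ->
    exists U : nat -> family M,
      (forall j, (j < k)%nat -> forall B, U j B -> Y B /\ (forall x, B x -> A x)) /\
      (forall j, (j < k)%nat -> r_disjoint d (Rs j) (U j)) /\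
      (forall x, A x -> exists j B, (j < k)%nat /\ U j B /\ B x).

(** The union over all ordinals alpha of the classes C_alpha, defined as the
    least class containing the bounded families and closed under the
    defining rule of C_alpha (alpha > 0). *)
Inductive finite_APC_family {M : Type} (d : M -> M -> R) : family M -> Prop :=
| APC_bounded : forall X, bounded_family d X -> finite_APC_family d X
| APC_step : forall X,
    (forall Rs : nat -> R, exists Y, finite_APC_family d Y /\ decomposes d X Y Rs) ->
    finite_APC_family d X.

Definition finite_APC {M : Type} (d : M -> M -> R) : Prop :=
  exists F : family M, F (fun _ => True) /\ finite_APC_family d F.

(** The projection [p] is bornologous, so a decomposition of a family [Z] in
    [H] for the constants [rho (R_j)] pulls back to a decomposition of the
    family of preimages of members of [Z] for the constants [R_j]; by induction
    on the APC complexity of [Z], the preimages of a family of finite APC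
    complexity have finite APC complexity as soon as the preimages of bounded
    families do.  The preimage of a set of diameter at most [b] lies within a
    distance [D = D(b)] of a coset [t i(K)], and the maps [k |-> t i(k)] are
    coarse embeddings uniformly in [t].  A second induction, on the complexity
    of a family of [K] containing [K] itself, shows that such uniform
    [D]-neighbourhoods of images form a family of finite APC complexity: an
    [R]-disjoint decomposition is obtained from an [(R + 2D)]-disjoint one
    upstairs. *)

From Stdlib Require Import Reals Lra List Classical ClassicalEpsilon.
Open Scope R_scope.

Section GroupFacts.
Variable G : Group.

Lemma gmul_Vr (x : G) : gmul x (ginv x) = gone.
Proof.
  rewrite <- (gmul_1l G (gmul x (ginv x))).
  rewrite <- (gmul_Vl G (ginv x)) at 1.
  rewrite <- gmul_assoc, (gmul_assoc G (ginv x) x (ginv x)), gmul_Vl, gmul_1l.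
  apply gmul_Vl.
Qed.

Lemma gmul_1r (x : G) : gmul x gone = x.
Proof. rewrite <- (gmul_Vl G x), gmul_assoc, gmul_Vr, gmul_1l. reflexivity. Qed.

Lemma gmul_cancel_l (a b c : G) : gmul a b = gmul a c -> b = c.
Proof.
  intro Habc.
  rewrite <- (gmul_1l G b), <- (gmul_1l G c), <- (gmul_Vl G a), <- !gmul_assoc, Habc.
  reflexivity.
Qed.

End GroupFacts.

Lemma hom_gone {G H : Group} (f : G -> H) : is_hom f -> f gone = gone.
Proof.
  intro hf. apply (gmul_cancel_l H (f gone)).
  rewrite <- hf, gmul_1l, gmul_1r. reflexivity.
Qed.

Lemma hom_ginv {G H : Group} (f : G -> H) : is_hom f -> forall x, f (ginv x) = ginv (f x).
Proof.
  intros hf x. apply (gmul_cancel_l H (f x)).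
  rewrite <- hf, !gmul_Vr. apply hom_gone; assumption.
Qed.

Lemma left_invariant_dist_gone {G : Group} (d : G -> G -> R) :
  left_invariant d -> forall x y, d x y = d gone (gmul (ginv x) y).
Proof. intros Hd x y. rewrite <- (gmul_Vl G x). symmetry. apply Hd. Qed.

Lemma list_uniform_bound {A : Type} (P : A -> R -> Prop) (l : list A) :
  (forall a r r', P a r -> r <= r' -> P a r') ->
  (forall a, In a l -> exists r, P a r) ->
  exists S, forall a, In a l -> P a S.
Proof.
  intros Pmono. induction l as [|a l IH]; intros Hex.
  - exists 0. intros a [].
  - destruct (Hex a (or_introl eq_refl)) as [r Hr].
    destruct IH as [S HS]. { intros b Hb. apply Hex. right. assumption. }
    exists (Rmax r S). intros b [<-|Hb].
    + apply (Pmono _ r); [assumption | apply Rmax_l].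
    + apply (Pmono _ S); [auto | apply Rmax_r].
Qed.

Lemma proper_ball_uniform_bound {M : Type} (d : M -> M -> R) (P : M -> R -> Prop) :
  proper_metric d ->
  (forall a r r', P a r -> r <= r' -> P a r') ->
  (forall a, exists r, P a r) ->
  forall x r, exists S, forall y, d x y <= r -> P y S.
Proof.
  intros Hd Pmono Hex x r. destruct (Hd x r) as [l Hl].
  destruct (list_uniform_bound P l Pmono) as [S HS]; [auto|].
  exists S. auto.
Qed.

Definition bornologous {M M' : Type} (d : M -> M -> R) (d' : M' -> M' -> R)
  (f : M -> M') : Prop :=
  forall r, exists S, forall x y, d x y <= r -> d' (f x) (f y) <= S.

Definition effectively_proper {M M' : Type} (d : M -> M -> R) (d' : M' -> M' -> R)
  (f : M -> M') : Prop :=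
  forall r, exists S, forall x y, d' (f x) (f y) <= r -> d x y <= S.

Lemma hom_bornologous {G1 G2 : Group} (d1 : G1 -> G1 -> R) (d2 : G2 -> G2 -> R)
  (f : G1 -> G2) :
  proper_metric d1 -> left_invariant d1 -> left_invariant d2 -> is_hom f ->
  bornologous d1 d2 f.
Proof.
  intros p1 l1 l2 hf r.
  destruct (proper_ball_uniform_bound d1 (fun z s => d2 gone (f z) <= s) p1)
    with (x := @gone G1) (r := r) as [S HS].
  - intros; lra.
  - intros a. exists (d2 gone (f a)). lra.
  - exists S. intros x y Hxy.
    rewrite (left_invariant_dist_gone d2 l2), <- hom_ginv, <- hf by assumption.
    apply HS. rewrite <- left_invariant_dist_gone; assumption.
Qed.

Lemma injective_hom_effectively_proper {K G : Group} (dK : K -> K -> R)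
  (dG : G -> G -> R) (i : K -> G) :
  proper_metric dG -> left_invariant dG -> left_invariant dK -> is_hom i ->
  (forall x y, i x = i y -> x = y) ->
  effectively_proper dK dG i.
Proof.
  intros pG lG lK hi iinj r.
  destruct (proper_ball_uniform_bound dG
              (fun g s => forall k, i k = g -> dK gone k <= s) pG)
    with (x := @gone G) (r := r) as [S HS].
  - intros g s s' Hs Hss' k Hk. specialize (Hs k Hk). lra.
  - intros g. destruct (classic (exists k, i k = g)) as [[k0 Hk0]|Hnone].
    + exists (dK gone k0). intros k Hk. rewrite (iinj k k0) by congruence. lra.
    + exists 0. intros k Hk. exfalso. eauto.
  - exists S. intros x y Hxy. rewrite (left_invariant_dist_gone dK lK).
    apply (HS (i (gmul (ginv x) y))); [|reflexivity].
    rewrite hi, hom_ginv, <- left_invariant_dist_gone; assumption.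
Qed.

Lemma surjective_proper_bounded_lifts {M M' : Type} (d : M -> M -> R)
  (d' : M' -> M' -> R) (p : M -> M') (x0 : M) (y0 : M') :
  proper_metric d' -> (forall y, exists x, p x = y) ->
  forall r, exists D, forall y, d' y0 y <= r -> exists x, p x = y /\ d x x0 <= D.
Proof.
  intros Hd' psurj r.
  apply (proper_ball_uniform_bound d' (fun y D => exists x, p x = y /\ d x x0 <= D) Hd').
  - intros y D D' [x [Hx HxD]] HD. exists x. split; [assumption | lra].
  - intros y. destruct (psurj y) as [x Hx]. exists (d x x0), x. split; [assumption | lra].
Qed.

Lemma bounded_preimage_near_coset {K G H : Group} (i : K -> G) (p : G -> H)
  (dG : G -> G -> R) (dH : H -> H -> R) :
  short_exact i p -> left_invariant dG -> proper_metric dH -> left_invariant dH ->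
  forall b, exists D, forall A : G -> Prop,
    (forall x y, A x -> A y -> dH (p x) (p y) <= b) ->
    exists t, forall a, A a -> exists k, dG a (gmul t (i k)) <= D.
Proof.
  intros [_ [hp [_ [psurj pker]]]] lG pH lH b.
  destruct (surjective_proper_bounded_lifts dG dH p gone gone pH psurj b) as [D HD].
  exists D. intros A HA.
  destruct (classic (exists a0, A a0)) as [[a0 Ha0]|Hempty].
  2: { exists gone. intros a Ha. exfalso. eauto. }
  exists a0. intros a Ha.
  set (z := gmul (ginv a0) a).
  destruct (HD (p z)) as [s [Hs Hsd]].
  { unfold z. rewrite hp, hom_ginv, <- left_invariant_dist_gone by assumption. auto. }
  destruct (proj1 (pker (gmul z (ginv s)))) as [k Hk].
  { rewrite hp, hom_ginv, Hs, gmul_Vr by assumption. reflexivity. }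
  assert (Ha_split : a = gmul (gmul a0 (i k)) s).
  { rewrite Hk, <- !gmul_assoc, gmul_Vl, gmul_1r. unfold z.
    rewrite gmul_assoc, gmul_Vr, gmul_1l. reflexivity. }
  exists k. rewrite Ha_split.
  rewrite <- (gmul_1r G (gmul a0 (i k))) at 2. rewrite lG. exact Hsd.
Qed.

(** The generated induction principle gives no hypothesis for the family [Y]
    hidden under the existential of [APC_step]. *)
Fixpoint finite_APC_family_ind' {M : Type} (d : M -> M -> R) (P : family M -> Prop)
  (Hbounded : forall X, bounded_family d X -> P X)
  (Hstep : forall X,
     (forall Rs, exists Y, finite_APC_family d Y /\ P Y /\ decomposes d X Y Rs) -> P X)
  (X : family M) (HX : finite_APC_family d X) {struct HX} : P X :=
  match HX with
  | APC_bounded _ X hb => Hbounded X hb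
  | APC_step _ X hs => Hstep X (fun Rs =>
      match hs Rs with
      | ex_intro _ Y (conj hY hd) =>
          ex_intro _ Y (conj hY (conj (finite_APC_family_ind' d P Hbounded Hstep Y hY) hd))
      end)
  end.

Lemma finite_APC_family_subfamily {M : Type} (d : M -> M -> R) (X X' : family M) :
  finite_APC_family d X -> (forall A, X' A -> X A) -> finite_APC_family d X'.
Proof.
  intros HX Hsub. destruct HX as [X [b Hb]|X Hstep].
  - apply APC_bounded. exists b. intros A HA. apply Hb, Hsub, HA.
  - apply APC_step. intros Rs. destruct (Hstep Rs) as [Y [HY [k Hk]]].
    exists Y. split; [assumption|]. exists k. auto.
Qed.

Definition preimage_family {M M' : Type} (f : M -> M') (Z : family M') : family M :=
  fun A => exists B, Z B /\ forall x, A x -> B (f x).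

Lemma finite_APC_family_preimage {M M' : Type} (d : M -> M -> R) (d' : M' -> M' -> R)
  (f : M -> M') :
  bornologous d d' f ->
  (forall Z, bounded_family d' Z -> finite_APC_family d (preimage_family f Z)) ->
  forall Z, finite_APC_family d' Z -> finite_APC_family d (preimage_family f Z).
Proof.
  intros Hf Hbounded. destruct (choice _ Hf) as [rho Hrho].
  apply finite_APC_family_ind'; [exact Hbounded|].
  intros Z HZ. apply APC_step. intros Rs.
  destruct (HZ (fun j => rho (Rs j))) as [Y [_ [IH [k Hk]]]].
  exists (preimage_family f Y). split; [exact IH|].
  exists k. intros A [BZ [HBZ HA]]. destruct (Hk BZ HBZ) as [U [HUY [HUdisj HUcover]]].
  exists (fun j C => exists B, U j B /\ C = (fun x => A x /\ B (f x))). split; [|split].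
  - intros j Hj C [B [HB ->]]. destruct (HUY j Hj B HB) as [HYB _]. split.
    + exists B. split; [assumption|]. intros x [_ Hx]. assumption.
    + intros x [Hx _]. assumption.
  - intros j Hj C C' [B [HB ->]] [B' [HB' ->]] Hne x y [_ Hx] [_ Hy].
    assert (HBB' : B <> B') by (intros <-; apply Hne; reflexivity).
    specialize (HUdisj j Hj B B' HB HB' HBB' (f x) (f y) Hx Hy).
    destruct (Rle_or_lt (d x y) (Rs j)) as [Hle|Hgt]; [|lra].
    specialize (Hrho (Rs j) x y Hle). lra.
  - intros x Hx. destruct (HUcover (f x) (HA x Hx)) as [j [B [Hj [HB HBx]]]].
    exists j, (fun x => A x /\ B (f x)). repeat split; auto. exists B. auto.
Qed.

Definition near_images {T M M' : Type} (d' : M' -> M' -> R) (f : T -> M -> M')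
  (D : R) (X : family M) : family M' :=
  fun C => exists t A, X A /\ forall c, C c -> exists a, A a /\ d' c (f t a) <= D.

Lemma finite_APC_family_near_images {T M M' : Type} (d : M -> M -> R)
  (d' : M' -> M' -> R) (f : T -> M -> M') (D : R) :
  is_metric d' ->
  (forall r, exists S, forall t x y, d x y <= r -> d' (f t x) (f t y) <= S) ->
  (forall r, exists S, forall t x y, d' (f t x) (f t y) <= r -> d x y <= S) ->
  forall X, finite_APC_family d X -> finite_APC_family d' (near_images d' f D X).
Proof.
  intros [_ [_ [Hsym Htri]]] Hborn Hprop. destruct (choice _ Hprop) as [sigma Hsigma].
  apply finite_APC_family_ind'.
  - intros X [b Hb]. destruct (Hborn b) as [S HS]. apply APC_bounded.
    exists (D + S + D). intros C [t [A [HA HC]]] c c' Hc Hc'.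
    destruct (HC c Hc) as [a [Ha Hca]]. destruct (HC c' Hc') as [a' [Ha' Hca']].
    pose proof (HS t a a' (Hb A HA a a' Ha Ha')).
    pose proof (Htri c (f t a) c'). pose proof (Htri (f t a) (f t a') c').
    rewrite (Hsym (f t a') c') in *. lra.
  - intros X HX. apply APC_step. intros Rs.
    destruct (HX (fun j => sigma (Rs j + 2 * D))) as [Y [_ [IH [k Hk]]]].
    exists (near_images d' f D Y). split; [exact IH|].
    exists k. intros C [t [A [HA HC]]]. destruct (Hk A HA) as [U [HUY [HUdisj HUcover]]].
    set (shadow := fun B c => C c /\ exists b, B b /\ d' c (f t b) <= D).
    exists (fun j C' => exists B, U j B /\ C' = shadow B). split; [|split].
    + intros j Hj C' [B [HB ->]]. destruct (HUY j Hj B HB) as [HYB _]. split.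
      * exists t, B. split; [assumption|]. intros c [_ Hc]. exact Hc.
      * intros c [Hc _]. exact Hc.
    + intros j Hj C1 C2 [B [HB ->]] [B' [HB' ->]] Hne x y
        [_ [b [Hb Hxb]]] [_ [b' [Hb' Hyb]]].
      assert (HBB' : B <> B') by (intros <-; apply Hne; reflexivity).
      specialize (HUdisj j Hj B B' HB HB' HBB' b b' Hb Hb').
      destruct (Rle_or_lt (d' x y) (Rs j)) as [Hle|Hgt]; [|lra].
      assert (Hbb' : d' (f t b) (f t b') <= Rs j + 2 * D).
      { pose proof (Htri (f t b) x (f t b')). pose proof (Htri x y (f t b')).
        rewrite (Hsym (f t b) x) in *. lra. }
      specialize (Hsigma _ t b b' Hbb'). lra.
    + intros c Hc. destruct (HC c Hc) as [a [Ha Hca]].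
      destruct (HUcover a Ha) as [j [B [Hj [HB HBa]]]].
      exists j, (shadow B). repeat split; auto.
      * exists B. auto.
      * exists a. auto.
Qed.

Theorem theorem4p8 (K G H : Group) (i : K -> G) (p : G -> H)
  (dK : K -> K -> R) (dG : G -> G -> R) (dH : H -> H -> R) :
  countable_group K -> countable_group G -> countable_group H ->
  short_exact i p ->
  proper_left_invariant_metric dK ->
  proper_left_invariant_metric dG ->
  proper_left_invariant_metric dH ->
  finite_APC dK -> finite_APC dH -> finite_APC dG.
Proof.
  intros _ _ _ Hses [mK [pK lK]] [mG [pG lG]] [mH [pH lH]]
    [FK [FK_total FK_apc]] [FH [FH_total FH_apc]].
  pose proof Hses as [hi [hp [iinj _]]].
  exists (preimage_family p FH). split; [exists (fun _ => True); auto|].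
  apply (finite_APC_family_preimage dG dH p (hom_bornologous dG dH p pG lG lH hp));
    [|exact FH_apc].
  intros Z [b Hb].
  destruct (bounded_preimage_near_coset i p dG dH Hses lG pH lH b) as [D HD].
  apply (finite_APC_family_subfamily dG
           (near_images dG (fun t k => gmul t (i k)) D FK)).
  - apply (finite_APC_family_near_images dK); [exact mG | | | exact FK_apc]; intros r.
    + destruct (hom_bornologous dK dG i pK lK lG hi r) as [S HS].
      exists S. intros t x y Hxy. rewrite lG. auto.
    + destruct (injective_hom_effectively_proper dK dG i pG lG lK hi iinj r) as [S HS].
      exists S. intros t x y Hxy. rewrite lG in Hxy. auto.
  - intros A [B [HB HA]].
    destruct (HD A) as [t Ht]; [intros x y Hx Hy; apply (Hb B); auto|].
    exists t, (fun _ => True). split; [assumption|].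
    intros a Ha. destruct (Ht a Ha) as [k Hk]. exists k. auto.
Qed.
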